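(* Let $p$ be a stochastic choice function rationalized by an MSC $\langle Q,\nu\rangle$. For every $M\in\mathcal N$ and distinct $i,j\in M$ with $p(i,\{i,j\})\in(0,1)$, $$\frac{\delta_{ij}(M)\,q_{ij}(M)}{p(j,\{i,j\})}=-\frac{\delta_{ji}(M)\,q_{ji}(M)}{p(i,\{i,j\})}.$$
   Context: $X$ is a finite set of alternatives; a menu is a nonempty subset of $X$, and $\mathcal N$ denotes the set of all menus. A stochastic choice function is a map $p:X\times\mathcal N\to[0,1]$ with $\sum_{i\in M}p(i,M)=1$ and $p(i,M)=0$ for $i\notin M$; $p(\cdot,M)$ denotes the row vector $(p(i,M))_{i\in M}$. For $M\in\mathcal N$ and $i,j\in M$ let $\delta_{ij}(M)=p(i,M)\,p(j,\{i,j\})-p(i,\{i,j\})\,p(j,M)$. An MSC (Markov stochastic choice model) $\langle Q,\nu\rangle$ consists of, for every menu $M$, a matrix $Q(M)=(q_{ij}(M))_{i,j\in M}$ with nonnegative entries and a probability distribution $\nu_M$ on $M$, such that for all $M\in\mathcal N$ and distinct $i,j\in M$: (A1) $q_{ii}(M)=1-\sum_{k\neq i}q_{ik}(M)>0$; (A2) if $q_{ij}(\{i,j\})=0$ then $q_{ji}(\{i,j\})>0$; (A3) $q_{ij}(\{i,j\})\,q_{ji}(M)=q_{ji}(\{i,j\})\,q_{ij}(M)$. For a right stochastic matrix $Q$ on $M$ and a distribution $\nu$ on $M$ define $\rho(\nu,Q)=\lim_{\alpha\to0^+}\sum_{t\ge0}\alpha(1-\alpha)^t\nu Q^t$ (the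 limit exists and satisfies $\rho(\nu,Q)(I-Q)=0$). $p$ is rationalized by the MSC $\langle Q,\nu\rangle$ if $p(\cdot,M)=\rho(\nu_M,Q(M))$ for every $M\in\mathcal N$. *)

From HB Require Import structures.
From mathcomp Require Import all_boot all_order all_algebra.
From mathcomp Require Import all_classical all_reals all_analysis.
Set Implicit Arguments. Unset Strict Implicit. Unset Printing Implicit Defensive.
Import Order.TTheory GRing.Theory Num.Theory numFieldNormedType.Exports.
Local Open Scope classical_set_scope.
Local Open Scope ring_scope.

(* Alternatives: a finite type X. Menus: nonempty M : {set X}.
   A stochastic choice function is p : X -> {set X} -> R (value on set0 irrelevant). *)
Definition menu2 (X : finType) (i j : X) : {set X} := ([set i; j])%SET.

Definition is_menu (X : finType) (M : {set X}) : Prop := M != finset.set0.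

Definition stoch_choice (R : realType) (X : finType) (p : X -> {set X} -> R) : Prop :=
  forall M : {set X}, is_menu M ->
    (forall i, 0 <= p i M <= 1) /\
    (\sum_(i in M) p i M = 1) /\
    (forall i, i \notin M -> p i M = 0).

Definition delta (R : realType) (X : finType) (p : X -> {set X} -> R)
  (M : {set X}) (i j : X) : R :=
  p i M * p j (menu2 i j) - p i (menu2 i j) * p j M.

(* An MSC: Q M i j = q_ij(M) (only entries with i,j in M matter),
   nu M i = nu_M(i). *)
Definition is_MSC (R : realType) (X : finType)
  (Q : {set X} -> X -> X -> R) (nu : {set X} -> X -> R) : Prop :=
  forall M : {set X}, is_menu M ->
    (forall i j, i \in M -> j \in M -> 0 <= Q M i j) /\
    (forall i, 0 <= nu M i) /\ (forall i, i \notin M -> nu M i = 0) /\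
    (\sum_(i in M) nu M i = 1) /\
    (forall i, i \in M ->
       Q M i i = 1 - \sum_(k in M | k != i) Q M i k /\ 0 < Q M i i) /\
    (forall i j, i \in M -> j \in M -> i != j ->
       (Q (menu2 i j) i j = 0 -> 0 < Q (menu2 i j) j i) /\
       (Q (menu2 i j) i j * Q M j i = Q (menu2 i j) j i * Q M i j)).

Fixpoint distr_iter (R : realType) (X : finType) (M : {set X})
  (nu : X -> R) (Q : X -> X -> R) (t : nat) : X -> R :=
  match t with
  | 0 => nu
  | t'.+1 => fun j => \sum_(k in M) distr_iter M nu Q t' k * Q k j
  end.

(* For a in (0,1) the series converges absolutely (nu Q^t is a probability
   vector), so limn of partial sums is its sum.
   rho(nu,Q)(j) = r  :<->  lim_{a -> 0+} sum_{t>=0} a (1-a)^t (nu Q^t)_j = r *)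
Definition abel_limit_is (R : realType) (X : finType) (M : {set X})
  (nu : X -> R) (Q : X -> X -> R) (j : X) (r : R) : Prop :=
  (fun a : R => limn (fun n : nat => \sum_(t < n) (a * (1 - a) ^+ t * distr_iter M nu Q t j)))
    @ at_right (0 : R) --> r.

Definition rationalized_by (R : realType) (X : finType) (p : X -> {set X} -> R)
  (Q : {set X} -> X -> X -> R) (nu : {set X} -> X -> R) : Prop :=
  is_MSC Q nu /\
  forall M : {set X}, is_menu M ->
    forall j, j \in M -> abel_limit_is M (nu M) (Q M) j (p j M).

From HB Require Import structures.
From mathcomp Require Import all_boot all_order all_algebra.
From mathcomp Require Import all_classical all_reals all_analysis.
From mathcomp Require Import ring lra.
Set Implicit Arguments. Unset Strict Implicit. Unset Printing Implicit Defensive.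
Import Order.TTheory GRing.Theory Num.Theory numFieldNormedType.Exports.
Local Open Scope classical_set_scope.
Local Open Scope ring_scope.

(* An Abel limit of the distributions [nu Q^t] is a stationary
   distribution of [Q]. On a binary menu {i,j} stationarity is the detailed
   balance [p_j q_ji = p_i q_ij], and axiom A3 transports this ratio to the
   transition probabilities of any larger menu M, so that
   [q_ij(M) / p_j = q_ji(M) / p_i]. Since [delta_ji(M) = - delta_ij(M)], the
   identity follows. *)

Section AbelLimitStationary.
Variables (R : realType) (X : finType) (M : {set X}) (nu : X -> R) (Q : X -> X -> R).
Hypothesis Q_ge0 : forall i j, i \in M -> j \in M -> 0 <= Q i j.
Hypothesis Q_row_sum : forall i, i \in M -> \sum_(k in M) Q i k = 1.
Hypothesis nu_ge0 : forall i, 0 <= nu i.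
Hypothesis nu_sum : \sum_(i in M) nu i = 1.

Lemma distr_iter_ge0 t k : k \in M -> 0 <= distr_iter M nu Q t k.
Proof.
elim: t k => [|t IH] k kM /=; first exact: nu_ge0.
by apply: sumr_ge0 => l lM; apply: mulr_ge0; [exact: IH | exact: Q_ge0].
Qed.

Lemma distr_iter_sum t : \sum_(k in M) distr_iter M nu Q t k = 1.
Proof.
elim: t => [|t IH] //=.
rewrite exchange_big /= -[RHS]IH; apply: eq_bigr => l lM.
by rewrite -mulr_sumr Q_row_sum // mulr1.
Qed.

Lemma distr_iter_le1 t k : k \in M -> distr_iter M nu Q t k <= 1.
Proof.
move=> kM; rewrite -(distr_iter_sum t) (bigD1 k) //= lerDl.
by apply: sumr_ge0 => l /andP[lM _]; exact: distr_iter_ge0.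
Qed.

Definition abel_sum a k n := \sum_(t < n) (a * (1 - a) ^+ t * distr_iter M nu Q t k).

Lemma abel_sum_le a k n : 0 < a < 1 -> k \in M -> abel_sum a k n <= 1 - (1 - a) ^+ n.
Proof.
move=> /andP[a0 a1] kM; elim: n => [|n IH]; first by rewrite /abel_sum big_ord0 expr0 subrr.
rewrite /abel_sum big_ord_recr /= -/(abel_sum a k n) exprS.
have d_le1 := distr_iter_le1 n kM.
have w_ge0 : 0 <= (1 - a) ^+ n by apply: exprn_ge0; lra.
have : a * (1 - a) ^+ n * distr_iter M nu Q n k <= a * (1 - a) ^+ n.
  by rewrite -[leRHS]mulr1 ler_wpM2l //; apply: mulr_ge0 => //; lra.
nra.
Qed.

Lemma is_cvgn_abel_sum a k : 0 < a < 1 -> k \in M -> cvgn (abel_sum a k).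
Proof.
move=> a01 kM; have /andP[a0 a1] := a01.
apply: nondecreasing_is_cvgn.
  apply/nondecreasing_seqP => n; rewrite /abel_sum big_ord_recr /= lerDl.
  by apply: mulr_ge0; [apply: mulr_ge0; [lra | apply: exprn_ge0; lra] | exact: distr_iter_ge0].
exists 1 => _ [n _ <-]; apply: le_trans (abel_sum_le n a01 kM) _.
have : 0 <= (1 - a) ^+ n by apply: exprn_ge0; lra.
lra.
Qed.

Lemma abel_sumS a j n :
  (1 - a) * \sum_(k in M) abel_sum a k n * Q k j = abel_sum a j n.+1 - a * nu j.
Proof.
rewrite /abel_sum big_ord_recl /= expr0 mulr1 [X in _ = X - _]addrC addrK.
under eq_bigr do rewrite mulr_suml.
rewrite exchange_big /= mulr_sumr; apply: eq_bigr => t _.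
rewrite /bump /= add1n exprS.
under eq_bigr do rewrite -mulrA.
by rewrite -mulr_sumr; ring.
Qed.

Lemma abel_limn_rec a j : 0 < a < 1 -> j \in M ->
  (1 - a) * \sum_(k in M) limn (abel_sum a k) * Q k j = limn (abel_sum a j) - a * nu j.
Proof.
move=> a01 jM.
pose S n := (1 - a) * \sum_(k in M) abel_sum a k n * Q k j.
have S_lim : S n @[n --> \oo] --> (1 - a) * \sum_(k in M) limn (abel_sum a k) * Q k j.
  apply: cvgM; first exact: cvg_cst.
  apply: cvg_big => [|k kM]; first exact: add_continuous.
  by apply: cvgM; [exact: is_cvgn_abel_sum | exact: cvg_cst].
have S_lim' : S n @[n --> \oo] --> limn (abel_sum a j) - a * nu j.
  rewrite /S; under eq_cvg do rewrite abel_sumS.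
  apply: cvgB; last exact: cvg_cst.
  by rewrite (cvg_shiftS (abel_sum a j)); exact: is_cvgn_abel_sum.
exact: cvg_unique S_lim S_lim'.
Qed.

Lemma abel_limit_stationary (p : X -> R) j : j \in M ->
  (forall k, k \in M -> abel_limit_is M nu Q k (p k)) ->
  \sum_(k in M) p k * Q k j = p j.
Proof.
move=> jM p_lim.
have id_lim : a @[a --> at_right (0 : R)] --> 0.
  by apply: cvg_at_right_filter; exact: cvg_id.
have lhs_lim : (1 - a) * \sum_(k in M) limn (abel_sum a k) * Q k j @[a --> at_right 0]
    --> (1 - 0) * \sum_(k in M) p k * Q k j.
  apply: cvgM; first by apply: cvgB; [exact: cvg_cst | exact: id_lim].
  apply: cvg_big => [|k kM]; first exact: add_continuous.
  by apply: cvgM; [exact: p_lim | exact: cvg_cst].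
have rhs_lim : limn (abel_sum a j) - a * nu j @[a --> at_right 0] --> p j - 0 * nu j.
  by apply: cvgB; [exact: p_lim | apply: cvgM; [exact: id_lim | exact: cvg_cst]].
have lhs_eq_rhs : \forall a \near at_right (0 : R),
    (1 - a) * \sum_(k in M) limn (abel_sum a k) * Q k j = limn (abel_sum a j) - a * nu j.
  near=> a; apply: abel_limn_rec => //; apply/andP; split; near: a.
    exact: nbhs_right_gt.
  exact: nbhs_right_lt ltr01.
have rhs_lim' : limn (abel_sum a j) - a * nu j @[a --> at_right 0]
    --> (1 - 0) * \sum_(k in M) p k * Q k j.
  by apply: cvg_trans lhs_lim; exact: near_eq_cvg.
suff : (1 - 0) * \sum_(k in M) p k * Q k j = p j - 0 * nu j.
  by rewrite subr0 mul1r mul0r subr0.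
exact: cvg_unique rhs_lim' rhs_lim.
Unshelve. all: by end_near.
Qed.

End AbelLimitStationary.

Lemma sum_menu2 (R : nmodType) (X : finType) (i j : X) (f : X -> R) : i != j ->
  \sum_(k in menu2 i j) f k = f i + f j.
Proof. by move=> ij; rewrite /menu2 big_setU1 ?big_set1 // inE. Qed.

Lemma menu2C (X : finType) (i j : X) : menu2 j i = menu2 i j.
Proof. exact: finset.setUC. Qed.

Lemma delta_swap (R : realType) (X : finType) (p : X -> {set X} -> R) M i j :
  delta p M j i = - delta p M i j.
Proof. by rewrite /delta menu2C; ring. Qed.

Section RationalizedMSC.
Variables (R : realType) (X : finType) (p : X -> {set X} -> R).
Variables (Q : {set X} -> X -> X -> R) (nu : {set X} -> X -> R).
Hypothesis p_rat : rationalized_by p Q nu.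

Lemma menu2_detailed_balance i j : i != j ->
  p j (menu2 i j) * Q (menu2 i j) j i = p i (menu2 i j) * Q (menu2 i j) i j.
Proof.
move=> ij; have [MSC p_lim] := p_rat; set M2 := menu2 i j.
have iM2 : i \in M2 by rewrite !inE eqxx.
have M2_menu : is_menu M2 by apply/set0Pn; exists i.
have [Q_ge0 [nu_ge0 [_ [nu_sum [A1 _]]]]] := MSC M2 M2_menu.
have Q_row_sum k : k \in M2 -> \sum_(l in M2) Q M2 k l = 1.
  by move=> kM2; rewrite (bigD1 k) //=; have [-> _] := A1 k kM2; ring.
have := abel_limit_stationary Q_ge0 Q_row_sum nu_ge0 nu_sum iM2 (p_lim M2 M2_menu).
have := Q_row_sum i iM2; rewrite !sum_menu2 // => row_i stationary_i.
by apply: (addrI (p i M2 * Q M2 i i)); rewrite stationary_i -mulrDr row_i mulr1.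
Qed.

Lemma ratio_transfer (F : idomainType) (a b c d x y : F) :
  a != 0 -> y * b = x * a -> a * d = b * c -> y * d = x * c.
Proof.
move=> a_neq0 yb_xa ad_bc; apply: (mulfI a_neq0).
by rewrite mulrCA ad_bc !mulrA yb_xa (mulrC x).
Qed.

Lemma MSC_detailed_balance M i j : is_menu M -> i \in M -> j \in M -> i != j ->
  0 < p j (menu2 i j) ->
  p j (menu2 i j) * Q M j i = p i (menu2 i j) * Q M i j.
Proof.
move=> M_menu iM jM ij pj_gt0; have [MSC _] := p_rat.
have [_ [_ [_ [_ [_ A23]]]]] := MSC M M_menu; have [A2 A3] := A23 i j iM jM ij.
have balance := menu2_detailed_balance ij.
(* By A2, q_ij({i,j}) = 0 would force q_ji({i,j}) > 0, hence p_j = 0. *)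
apply: ratio_transfer (balance) A3; apply/eqP => Qij0.
have := A2 Qij0; move: balance; rewrite Qij0 mulr0 => /eqP.
by rewrite mulf_eq0 gt_eqF //= => /eqP ->; rewrite ltxx.
Qed.

End RationalizedMSC.

Theorem lemmaA2 (R : realType) (X : finType) (p : X -> {set X} -> R)
  (Q : {set X} -> X -> X -> R) (nu : {set X} -> X -> R) :
  stoch_choice p -> rationalized_by p Q nu ->
  forall (M : {set X}) (i j : X), i \in M -> j \in M -> i != j ->
    0 < p i (menu2 i j) < 1 ->
    delta p M i j * Q M i j / p j (menu2 i j) =
    - (delta p M j i * Q M j i / p i (menu2 i j)).
Proof.
move=> p_sc p_rat M i j iM jM ij /andP[pi_gt0 pi_lt1].
have M2_menu : is_menu (menu2 i j) by apply/set0Pn; exists i; rewrite !inE eqxx.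
have [_ [p_sum _]] := p_sc _ M2_menu; rewrite sum_menu2 // in p_sum.
have pj_gt0 : 0 < p j (menu2 i j) by lra.
have M_menu : is_menu M by apply/set0Pn; exists i.
have balance := MSC_detailed_balance p_rat M_menu iM jM ij pj_gt0.
rewrite delta_swap !mulNr -!mulrA; congr (- (_ * _)); apply/eqP.
rewrite eqr_div ?(lt0r_neq0 pi_gt0) ?(lt0r_neq0 pj_gt0) //.
by rewrite (mulrC (Q M i j)) (mulrC (Q M j i)) balance eqxx.
Qed.
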